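(* (i) For real $p\neq 0$, the inequality $\frac{1}{3}\left( \frac{\sin x}{x}\right) ^{4p}+\frac{2}{3}\left( \frac{\tan x}{x}\right) ^{p}>1$ holds for all $x\in(0,\pi/2)$ if and only if $p>0$ or $p\leq -\frac{\ln 3}{4(\ln \pi -\ln 2)}$. (ii) The reverse inequality $\frac{1}{3}\left( \frac{\sin x}{x}\right) ^{4p}+\frac{2}{3}\left( \frac{\tan x}{x}\right) ^{p}<1$ holds for all $x\in(0,\pi/2)$ if and only if $-2/5\leq p<0$. *)

From Stdlib Require Import Reals.
Open Scope R_scope.

Definition lhs (p x : R) : R :=
  1/3 * Rpower (sin x / x) (4 * p) + 2/3 * Rpower (tan x / x) p.

(* For fixed x, lhs p x = (1/3) exp (4 p ln (sin x / x)) + (2/3) exp (p ln (tan x / x)) is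
   convex in p and equals 1 at p = 0.  Hence lhs > 1 at some p0 < 0 propagates to every p <= p0,
   and lhs < 1 at some p0 < 0 propagates to [p0, 0) and forces lhs > 1 for p > 0.  Both
   equivalences therefore follow from four facts: lhs < 1 at p = -2/5 and lhs > 1 at the
   critical exponent p = -ln 3 / (4 ln (PI/2)) for every x in (0, PI/2), obtained from Taylor
   bounds in x^2 and polynomial inequalities; lhs <= 1 close to PI/2 for every p between the
   critical exponent and 0, because (sin x / x)^(4p) tends to (PI/2)^(-4p) < 3 while
   (tan x / x)^p tends to 0; and lhs >= 1 close to 0 for p < -2/5, because
   lhs p x - 1 = p (5p + 2) x^4 / 45 + O(x^6). *)

From Stdlib Require Import Reals Lra Psatz Factorial List.
From Coquelicot Require Import Coquelicot.
Import ListNotations.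
Open Scope R_scope.

Lemma pow_lt_compat x y n : 0 <= x < y -> n <> 0%nat -> x ^ n < y ^ n.
Proof.
  intros [Hx Hxy] Hn; destruct n as [|n]; [easy|]; clear Hn.
  induction n as [|n IH]; [simpl; lra|].
  change (x * x ^ S n < y * y ^ S n).
  pose proof (pow_le x (S n) Hx); nra.
Qed.

Lemma pow_le_inv a b n : 0 <= b -> n <> 0%nat -> a ^ n <= b ^ n -> a <= b.
Proof.
  intros Hb Hn H; destruct (Rle_or_lt a b) as [|Hba]; [easy|].
  pose proof (pow_lt_compat b a n (conj Hb Hba) Hn); lra.
Qed.

Lemma Rpower_gt_0 a e : 0 < Rpower a e.
Proof. apply exp_pos. Qed.

Lemma Rpower_div a b e : 0 < a -> 0 < b -> Rpower (a / b) e = Rpower a e / Rpower b e.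
Proof.
  intros Ha Hb; unfold Rpower, Rdiv.
  rewrite ln_mult, ln_Rinv, Rmult_plus_distr_l, exp_plus by (auto with real).
  now rewrite <- Ropp_mult_distr_r, exp_Ropp.
Qed.

Lemma Rpower_inv a e : 0 < a -> Rpower (/ a) e = Rpower a (- e).
Proof. intros Ha; unfold Rpower; rewrite ln_Rinv by lra; f_equal; ring. Qed.

Lemma Rpower_le_compat_neg a b e : 0 < a <= b -> e <= 0 -> Rpower b e <= Rpower a e.
Proof.
  intros Hab He; replace e with (- - e) by ring; rewrite (Rpower_Ropp b), (Rpower_Ropp a).
  apply Rinv_le_contravar; [apply Rpower_gt_0 | apply Rle_Rpower_l; lra].
Qed.

Lemma Rpower_le_of_root_le a e w : 0 < a -> e < 0 -> Rpower a (/ e) <= w -> Rpower w e <= a.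
Proof.
  intros Ha He Hw.
  apply Rle_trans with (Rpower (Rpower a (/ e)) e).
  - apply Rpower_le_compat_neg; [split; [apply Rpower_gt_0 | easy] | lra].
  - rewrite Rpower_mult, Rinv_l, Rpower_1 by lra; lra.
Qed.

Lemma Rpower_pow_root a e m n : 0 < a -> e * INR n = INR m -> Rpower a e ^ n = a ^ m.
Proof.
  intros Ha He; rewrite <- Rpower_pow, Rpower_mult, He by apply Rpower_gt_0.
  now apply Rpower_pow.
Qed.

Lemma ln_le_sub_1 a : 0 < a -> ln a <= a - 1.
Proof. intros Ha; pose proof (exp_ineq1_le (ln a)); rewrite exp_ln in * by easy; lra. Qed.

Lemma exp_mul_convex a p1 p2 p3 : p1 < p2 < p3 ->
  (p3 - p1) * exp (p2 * a) <= (p3 - p2) * exp (p1 * a) + (p2 - p1) * exp (p3 * a).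
Proof.
  intros Hp.
  assert (Hshift : forall p, exp (p2 * a) * (1 + (p - p2) * a) <= exp (p * a)).
  { intros p; replace (p * a) with (p2 * a + (p - p2) * a) by ring.
    rewrite exp_plus; apply Rmult_le_compat_l; [apply Rlt_le, exp_pos | apply exp_ineq1_le]. }
  pose proof (Hshift p1) as H1; pose proof (Hshift p3) as H3.
  apply (Rmult_le_compat_l (p3 - p2)) in H1; [|lra].
  apply (Rmult_le_compat_l (p2 - p1)) in H3; [|lra].
  lra.
Qed.

Lemma le_of_derive_nonneg (f df : R -> R) a b : a <= b ->
  (forall x, is_derive f x (df x)) -> (forall x, a <= x <= b -> 0 <= df x) -> f a <= f b.
Proof.
  intros Hab Hd Hpos; destruct (Req_dec a b) as [->|Hne]; [lra|].
  destruct (MVT_gen f a b df) as [c [Hc E]].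
  - intros x _; apply Hd.
  - intros x _; apply continuity_pt_filterlim, (ex_derive_continuous f x).
    eexists; apply Hd.
  - rewrite Rmin_left, Rmax_right in Hc by lra.
    assert (0 <= df c * (b - a)) by (apply Rmult_le_pos; [apply Hpos|]; lra).
    lra.
Qed.

Lemma exp_ge_taylor2 u : 0 <= u -> 1 + u + u^2/2 <= exp u.
Proof.
  intros Hu; pose proof (exp_ge_taylor u 2 Hu) as H.
  simpl in H; lra.
Qed.

Lemma exp_neg_le_taylor2 w : 0 <= w -> exp (- w) <= 1 - w + w^2/2.
Proof.
  intros Hw.
  assert (H := le_of_derive_nonneg (fun s => 1 - s + s^2/2 - exp (- s))
                 (fun s => -1 + s + exp (- s)) 0 w Hw).
  cbv beta in H; rewrite Ropp_0, exp_0 in H.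
  enough (1 - 0 + 0^2/2 - 1 <= 1 - w + w^2/2 - exp (- w)) by (simpl in *; lra).
  apply H; [intros x; auto_derive; [easy | simpl; lra] |].
  intros x _; pose proof (exp_ineq1_le (- x)); lra.
Qed.

Lemma exp_neg_ge_taylor3 w : 0 <= w -> 1 - w + w^2/2 - w^3/6 <= exp (- w).
Proof.
  intros Hw.
  assert (H := le_of_derive_nonneg (fun s => exp (- s) - (1 - s + s^2/2 - s^3/6))
                 (fun s => - exp (- s) - (-1 + s - s^2/2)) 0 w Hw).
  cbv beta in H; rewrite Ropp_0, exp_0 in H.
  enough (1 - (1 - 0 + 0^2/2 - 0^3/6) <= exp (- w) - (1 - w + w^2/2 - w^3/6))
    by (simpl in *; lra).
  apply H; [intros x; auto_derive; [easy | simpl; lra] |].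
  intros x Hx; pose proof (exp_neg_le_taylor2 x (proj1 Hx)); lra.
Qed.

Definition sinc_lo (y : R) := 1 - y/6 + y^2/120 - y^3/5040 + y^4/362880 - y^5/39916800.
Definition sinc_hi (y : R) := 1 - y/6 + y^2/120 - y^3/5040 + y^4/362880.
Definition cos_lo (y : R) := 1 - y/2 + y^2/24 - y^3/720 + y^4/40320 - y^5/3628800.
Definition cos_hi (y : R) := 1 - y/2 + y^2/24 - y^3/720 + y^4/40320.

Lemma INR_fact_S n : INR (fact (S n)) = INR (S n) * INR (fact n).
Proof. now rewrite fact_simpl, mult_INR. Qed.

Ltac eval_fact := repeat rewrite INR_fact_S; rewrite ?INR_IZR_INZ; simpl Z.of_nat.

Lemma sinc_cos_taylor x : 0 < x <= 2 ->
  sinc_lo (x^2) <= sin x / x <= sinc_hi (x^2) /\ cos_lo (x^2) <= cos x <= cos_hi (x^2).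
Proof.
  intros Hx.
  destruct (pre_sin_bound x 2 ltac:(lra) ltac:(lra)) as [s1 _].
  destruct (pre_sin_bound x 1 ltac:(lra) ltac:(lra)) as [_ s2].
  destruct (pre_cos_bound x 2 ltac:(lra) ltac:(lra)) as [c1 _].
  destruct (pre_cos_bound x 1 ltac:(lra) ltac:(lra)) as [_ c2].
  unfold sin_approx, sin_term, cos_approx, cos_term in *.
  cbn [sum_f_R0 Nat.mul Nat.add] in *.
  revert s1 s2 c1 c2; eval_fact; intros.
  unfold sinc_lo, sinc_hi, cos_lo, cos_hi.
  split; split; try (simpl in *; lra);
    apply (Rmult_le_reg_l x); try lra; field_simplify; simpl in *; lra.
Qed.

Lemma sin_cos_taylor_small u : 0 <= u <= 2 ->
  u - u^3/6 <= sin u /\ 1 - u^2/2 <= cos u <= 1 - u^2/2 + u^4/24.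
Proof.
  intros Hu.
  destruct (pre_sin_bound u 0 ltac:(lra) ltac:(lra)) as [s1 _].
  destruct (pre_cos_bound u 0 ltac:(lra) ltac:(lra)) as [c1 c2].
  unfold sin_approx, sin_term, cos_approx, cos_term in *.
  cbn [sum_f_R0 Nat.mul Nat.add] in *.
  revert s1 c1 c2; eval_fact; intros; simpl in *; lra.
Qed.

Lemma PI_gt_157_50 : 157/50 < PI.
Proof.
  enough (157/100 < PI/2) by lra.
  apply PI2_lower_bound; [lra|].
  destruct (sinc_cos_taylor (157/100) ltac:(lra)) as [_ [Hc _]].
  unfold cos_lo in Hc; simpl in Hc; lra.
Qed.

Lemma PI_lt_3927_1250 : PI < 3927/1250.
Proof.
  destruct (Rlt_or_le PI (3927/1250)) as [H|H]; [exact H|exfalso].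
  destruct (pre_sin_bound (3927/1250) 3 ltac:(lra) ltac:(lra)) as [_ Hs].
  assert (0 <= sin (3927/1250)) by (apply sin_ge_0; lra).
  unfold sin_approx, sin_term in Hs; cbn [sum_f_R0 Nat.mul Nat.add] in Hs.
  revert Hs; eval_fact; intros; simpl in Hs; lra.
Qed.

Definition p_crit := - ln 3 / (4 * (ln PI - ln 2)).

Lemma ln_PI_sub_ln_2 : ln PI - ln 2 = ln (PI/2).
Proof.
  pose proof PI_gt_157_50; unfold Rdiv.
  rewrite ln_mult, ln_Rinv by (try apply Rinv_0_lt_compat; lra); ring.
Qed.

Lemma ln_half_PI_pos : 0 < ln (PI/2).
Proof. rewrite <- ln_1; pose proof PI_gt_157_50; apply ln_increasing; lra. Qed.

Lemma p_crit_eq : p_crit = - (ln 3 / ln (PI/2)) / 4.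
Proof.
  unfold p_crit; rewrite ln_PI_sub_ln_2; pose proof ln_half_PI_pos; field; lra.
Qed.

Lemma ln_3_div_ln_half_PI_bounds : 2 <= ln 3 / ln (PI/2) <= 61/25.
Proof.
  pose proof PI_gt_157_50; pose proof PI_lt_3927_1250; pose proof ln_half_PI_pos.
  assert (Hlo : ln ((PI/2)^2) < ln 3) by (apply ln_increasing; [apply pow_lt|]; nra).
  assert (Hhi : ln (3^25) < ln ((PI/2)^61)).
  { apply ln_increasing; [apply pow_lt; lra|].
    apply Rlt_le_trans with ((157/100)^61); [lra | apply pow_incr; lra]. }
  rewrite ln_pow in Hlo by lra; rewrite 2!ln_pow in Hhi by lra; simpl INR in Hlo, Hhi.
  set (L := ln (PI/2)) in *.
  split; apply (Rmult_le_reg_r L); try lra;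
    unfold Rdiv; rewrite Rmult_assoc, Rinv_l by lra; lra.
Qed.

Lemma p_crit_bounds : -5/8 <= p_crit <= -1/2.
Proof. rewrite p_crit_eq; pose proof ln_3_div_ln_half_PI_bounds; lra. Qed.

(** * Polynomial positivity certificates *)

(* [bernstein b [c_0; ...; c_n] y] is the sum of the c_i y^i (b - y)^(n - i).  A polynomial
   inequality on (0, b] is certified by an identity, checked by [field], expressing the difference
   as y^k times such a sum with positive coefficients. *)
Fixpoint bernstein (b : R) (cs : list R) (y : R) : R :=
  match cs with
  | [] => 0
  | c :: cs' => c * (b - y) ^ length cs' + y * bernstein b cs' y
  end.

Lemma bernstein_pos b cs y :
  0 < y <= b -> cs <> [] -> List.Forall (Rlt 0) cs -> 0 < bernstein b cs y.
Proof.
  intros Hy; induction cs as [|c cs IH]; intros Hne Hpos; [easy|].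
  inversion_clear Hpos as [|? ? Hc Hcs]; simpl.
  destruct cs as [|c' cs'].
  - simpl; lra.
  - assert (0 <= c * (b - y) ^ length (c' :: cs'))
      by (apply Rmult_le_pos; [lra | apply pow_le; lra]).
    assert (0 < y * bernstein b (c' :: cs') y)
      by (apply Rmult_lt_0_compat; [lra | apply IH; easy]).
    lra.
Qed.

Lemma bernstein_certificate_pos e y k b cs : 0 < y <= b -> cs <> [] -> List.Forall (Rlt 0) cs ->
  e = y ^ k * bernstein b cs y -> 0 < e.
Proof.
  intros Hy Hne Hpos ->.
  apply Rmult_lt_0_compat; [apply pow_lt; lra | now apply bernstein_pos].
Qed.

Ltac bernstein_certificate y k b cs :=
  lazymatch goal with |- 0 < _ => idtac | |- _ < _ => apply Rlt_0_minus end;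
  apply (bernstein_certificate_pos _ y k b cs);
  [lra | discriminate | repeat constructor; lra | cbn [bernstein length]; field].

(** * Convexity in the exponent *)

Lemma lhs_0 x : lhs 0 x = 1.
Proof. unfold lhs, Rpower; rewrite !Rmult_0_r, !Rmult_0_l, exp_0; lra. Qed.

Lemma lhs_convex x p1 p2 p3 : p1 < p2 < p3 ->
  (p3 - p1) * lhs p2 x <= (p3 - p2) * lhs p1 x + (p2 - p1) * lhs p3 x.
Proof.
  intros Hp; unfold lhs, Rpower.
  rewrite !(Rmult_comm 4), !Rmult_assoc.
  pose proof (exp_mul_convex (4 * ln (sin x / x)) p1 p2 p3 Hp).
  pose proof (exp_mul_convex (ln (tan x / x)) p1 p2 p3 Hp).
  lra.
Qed.

Lemma lhs_gt_1_left x p p0 : p <= p0 -> p0 < 0 -> lhs p0 x > 1 -> lhs p x > 1.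
Proof.
  intros Hp Hp0 H; destruct (Req_dec p p0) as [->|Hne]; [exact H|].
  pose proof (lhs_convex x p p0 0 ltac:(lra)) as C; rewrite lhs_0 in C.
  assert ((0 - p) * 1 < (0 - p) * lhs p0 x) by (apply Rmult_lt_compat_l; lra).
  nra.
Qed.

Lemma lhs_lt_1_right x p p0 : p0 <= p < 0 -> lhs p0 x < 1 -> lhs p x < 1.
Proof.
  intros Hp H; destruct (Req_dec p p0) as [->|Hne]; [exact H|].
  pose proof (lhs_convex x p0 p 0 ltac:(lra)) as C; rewrite lhs_0 in C.
  assert ((0 - p) * lhs p0 x < (0 - p) * 1) by (apply Rmult_lt_compat_l; lra).
  nra.
Qed.

Lemma lhs_gt_1_pos x p p0 : p0 < 0 < p -> lhs p0 x < 1 -> lhs p x > 1.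
Proof.
  intros Hp H.
  pose proof (lhs_convex x p0 0 p ltac:(lra)) as C; rewrite lhs_0 in C.
  assert ((p - 0) * lhs p0 x < (p - 0) * 1) by (apply Rmult_lt_compat_l; lra).
  nra.
Qed.

(** * The exponents -2/5 and -1/2 *)

Lemma tan_div_eq x : 0 < x < PI/2 -> tan x / x = (sin x / x) / cos x.
Proof.
  intros Hx; assert (0 < cos x) by (apply cos_gt_0; lra).
  unfold tan; field; lra.
Qed.

Lemma lhs_root_form p x : 0 < x < PI/2 ->
  lhs p x = 1/3 / Rpower (sin x / x) (- p) ^ 4
            + 2/3 * (Rpower (cos x) (- p) / Rpower (sin x / x) (- p)).
Proof.
  intros Hx.
  assert (0 < sin x / x) by (apply Rdiv_lt_0_compat; [apply sin_gt_0|]; lra).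
  assert (0 < cos x) by (apply cos_gt_0; lra).
  unfold lhs; rewrite tan_div_eq, (Rpower_div (sin x / x) (cos x)) by (try split; lra).
  rewrite <- Rpower_pow, Rpower_mult by apply Rpower_gt_0.
  replace (- p * INR 4) with (- (4 * p)) by (simpl; ring).
  rewrite !Rpower_Ropp; field; repeat split; apply Rgt_not_eq, Rpower_gt_0.
Qed.

Lemma root_form_lt_1 u v : 0 < u -> 1 + 2 * v * u^3 < 3 * u^4 ->
  1/3 / u^4 + 2/3 * (v / u) < 1.
Proof.
  intros Hu H; assert (0 < u^4) by (apply pow_lt; lra).
  replace (1/3 / u^4 + 2/3 * (v / u)) with ((1 + 2 * v * u^3) * / (3 * u^4)) by (field; lra).
  apply (Rmult_lt_reg_r (3 * u^4)); [lra|].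
  rewrite Rmult_assoc, Rinv_l, Rmult_1_r by lra; lra.
Qed.

Lemma root_form_gt_1 u v : 0 < u -> 3 * u^4 < 1 + 2 * v * u^3 ->
  1/3 / u^4 + 2/3 * (v / u) > 1.
Proof.
  intros Hu H; assert (0 < u^4) by (apply pow_lt; lra).
  replace (1/3 / u^4 + 2/3 * (v / u)) with ((1 + 2 * v * u^3) * / (3 * u^4)) by (field; lra).
  apply Rlt_gt, (Rmult_lt_reg_r (3 * u^4)); [lra|].
  rewrite Rmult_assoc, Rinv_l, Rmult_1_r by lra; lra.
Qed.

Lemma quartic_mono a b c d : 0 <= a <= b -> d <= c -> 2 * c <= 3 * b ->
  3 * a^4 - 2 * c * a^3 <= 3 * b^4 - 2 * d * b^3.
Proof.
  intros Hab Hdc Hcb.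
  assert (E : 3 * b^4 - 2 * c * b^3 - (3 * a^4 - 2 * c * a^3)
              = (b - a) * ((b^2 + a*b + a^2) * (3*b - 2*c) + 3 * a^3)) by ring.
  assert (0 <= (b^2 + a*b + a^2) * (3*b - 2*c)) by (apply Rmult_le_pos; nra).
  assert (0 <= a^3) by (apply pow_le; lra).
  assert (0 <= (b - a) * ((b^2 + a*b + a^2) * (3*b - 2*c) + 3 * a^3))
    by (apply Rmult_le_pos; lra).
  assert (d * b^3 <= c * b^3) by (apply Rmult_le_compat_r; [apply pow_le|]; lra).
  lra.
Qed.

(* Polynomials in y = x^2 close to the expansions of (sin x / x)^(2/5), (cos x)^(2/5),
   sqrt (sin x / x) and sqrt (cos x); on the ranges where they are used, each bounds its function
   from the side stated in its name. *)
Definition sinc_2_5_lo (y : R) := 1 - y/15 - y^3/23625 - y^4/285000.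
Definition cos_2_5_hi (y : R) := 1 - y/5 - y^2/75 - 4*y^3/1125.
Definition sinc_sqrt_hi (y : R) := 1 - y/12 + y^2/1440 - y^3/24192.
Definition cos_sqrt_lo (y : R) := 1 - y/4 - y^2/96 - 19*y^3/5760 - 559*y^4/645120 - y^5/1400.

Section NegTwoFifths.
Variable y : R.
Hypothesis Hy : 0 < y <= 247/100.

Lemma sinc_2_5_lo_pow_lt : sinc_2_5_lo y ^ 5 < sinc_lo y ^ 2.
Proof. unfold sinc_2_5_lo, sinc_lo; bernstein_certificate y 4%nat (247/100)
    [3700000000000000000000000000000/2067701829434200413705978646755559044381333; 1778565920000000000000000000000000/68234160371328613652297295342933448464583989; 84629864157568750000000000000000000/477639122599300295566081067400534139252087923; 3205246338642779075000000000000000000/4298752103393702660094729606604807253268791307; 2155153719702948137588281250000000000/992019716167777536944937601524186289215874917; 96721487759344048855505623437500000000/20832414039523328275843689632007912073533373257; 5169295408709838451746477602216406250000/687469663304269833102841757856261098426601317481; 19385210509972379398408887299789487500000/2062408989912809499308525273568783295279803952443; 396113133453157366551763923306557396350000/43310588788168999485479030744944449200875883001303; 128642755774854883819831099437661999609600/18561680909215285493776727462119049657518235571987; 376779335721778452618562692820997659219472/92808404546076427468883637310595248287591177859935; 46243779258374388881241778797941629453544541976/25580316503012315321111052533732815309267318397644584375; 6077451678732380631136389735281093272642581328229/10232126601204926128444421013493126123706927359057833750000; 1819146116793094288354506948431514557707224014150647/13301764581566403966977747317541063960819005566775183875000000; 166882445679293559686766063856561838364580530496053817/8313602863479002479361092073463164975511878479234489921875000000;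 25370917786716500015735596626441330521937468219911993437/16627205726958004958722184146926329951023756958468979843750000000000; 9412843103322267568441205093708875113331267697890905622903/332544114539160099174443682938526599020475139169379596875000000000000000]. Qed.

Lemma cos_hi_sq_lt : cos_hi y ^ 2 < cos_2_5_hi y ^ 5.
Proof. unfold cos_2_5_hi, cos_hi; bernstein_certificate y 4%nat (247/100)
    [160000000000000000000/692234809588198496663356131; 222982250000000000000/98890687084028356666193733; 6850305833125000000000/692234809588198496663356131; 160256446589573125000000/6230113286293786469970205179; 1912412925319722740703125/43610793004056505289791436253; 2873581427688105020408125/56071019576644078229731846611; 2334449736316944905658551/56071019576644078229731846611; 97953164310895693213007323/4205326468248305867229888495825; 13662892554907509720680855629/1576997425593114700211208185934375; 43484355185919570246177337559/21902742022126593058489002582421875; 17530660118148874378145301550547/73921754324677251572400383715673828125; 8783897295006347306161161129641513/970223025511388926887755036268218994140625]. Qed.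

Lemma quartic_2_5_gt_1 :
  1 < 3 * sinc_2_5_lo y ^ 4 - 2 * cos_2_5_hi y * sinc_2_5_lo y ^ 3.
Proof. unfold sinc_2_5_lo, cos_2_5_hi; bernstein_certificate y 3%nat (247/100)
    [73600000000000000000000000/2407255549395484918727277569182203; 69542000000000000000000000/185173503799652686055944428398631; 393667328800000000000000000/185173503799652686055944428398631; 352516704054400000000000000/48007945429539585273763370325571; 604159902358762576000000000000/34997792218134357664573496967341259; 37806377923277862910400000000/1296214526597568802391610998790417; 240971446381680896412653872000000/6614582729227393598604390926827497951; 75081897675675737767454307548800/2204860909742464532868130308942499317; 2363016836402004488484082886218816/99218740938410903979065863902412469265; 641028971855876373440286650466019807/52089838992665724589009578548766546364125; 45730768584508717802179730347437381907/10017276729358793190194149720916643531562500; 1665433699377803753569742883372796486637/1446939972018492349694710515243515176781250000; 2876571821071285625958448408620714524481647/16278074685208038934065493296489545738789062500000; 42229118815629121811907333421016086969369549607/3385839534523272098285622605669825513668125000000000000]. Qed.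

Lemma sinc_lo_pos : 0 < sinc_lo y.
Proof. unfold sinc_lo; bernstein_certificate y 0%nat (247/100)
    [10000000000/919358226007; 137650000000/2758074678021; 252125225000/2758074678021; 4838105522125/57919568238441; 635036108834405/16680835652671008; 253984415019064993/36697838435876217600]. Qed.

Lemma sinc_2_5_lo_gt : 2/3 < sinc_2_5_lo y.
Proof. unfold sinc_2_5_lo; bernstein_certificate y 0%nat (247/100)
    [100000000/11166294243; 350600000/11166294243; 150600000/3722098081; 79256723108/3517382686545; 15866381414363/3517382686545000]. Qed.

Lemma cos_2_5_hi_pos : 0 < cos_2_5_hi y.
Proof. unfold cos_2_5_hi; bernstein_certificate y 0%nat (247/100)
    [1000000/15069223; 2506000/15069223; 5791964/45207669; 417459608/16952875875]. Qed.

End NegTwoFifths.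

Section NegHalf.
Variable y : R.
Hypothesis Hy : 0 < y <= 1907/1000.

Lemma sinc_hi_lt_sq : sinc_hi y < sinc_sqrt_hi y ^ 2.
Proof. unfold sinc_sqrt_hi, sinc_hi; bernstein_certificate y 4%nat (1907/1000)
    [41875/32991679728; 567475/226228660992; 2641001449/2128359242612736]. Qed.

Lemma cos_sqrt_lo_sq_lt : cos_sqrt_lo y ^ 2 < cos_lo y.
Proof. unfold cos_sqrt_lo, cos_lo; bernstein_certificate y 5%nat (1907/1000)
    [525224609375000/14300016024176616069; 17669369248046875/114400128193412928552; 906231535579609375/3660804102189213713664; 397376771138778656375/2186720317041023658295296; 178145812132252201733/3280080475561535487442944; 7810457220873935055317/4100100594451919359303680000]. Qed.

Lemma quartic_sqrt_lt_1 :
  3 * sinc_sqrt_hi y ^ 4 - 2 * cos_sqrt_lo y * sinc_sqrt_hi y ^ 3 < 1.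
Proof. unfold sinc_sqrt_hi, cos_sqrt_lo; bernstein_certificate y 2%nat (1907/1000)
    [50000000000000000000000000000000000/6939522229277657250914696056410233302803; 35845325000000000000000000000000000000/437189900444492406807625851553844698076589; 186114035627070312500000000000000000000/437189900444492406807625851553844698076589; 581169508016023544921875000000000000000/437189900444492406807625851553844698076589; 228960570586652928482659912109375000000000/82628891184009064886641285943676647936475321; 334289791835009123569174964660644531250000/82628891184009064886641285943676647936475321; 232503180130550997449200923541339111328125/55085927456006043257760857295784431957650214; 6291819484268036930069295976373533049169921875/1998958135523547297737625989549425466879210965632; 210649344375447295642672860573085171638770703125/127933320673507027055208063331163229880269501800448; 7094607336467878637760004933108574654017550583125/12281598784656674597299974079791670068505872172843008; 113488657944119521209078447348043366554889499851825/917026042587698369931731397957778031781771788905611264; 488379647561344659012361919779740042920020174197083/37729071466465304362905520373120010450450039314973720576; 1596430559087315010044292721900580172909227436418613/6602587506631428263508466065296001828828756880120401100800]. Qed.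

Lemma sinc_sqrt_hi_gt : 2/3 < sinc_sqrt_hi y.
Proof. unfold sinc_sqrt_hi; bernstein_certificate y 0%nat (1907/1000)
    [1000000000/20805268929; 2523250000/20805268929; 24648916225/249663227148; 4273648613557/167773688643456]. Qed.

End NegHalf.

Lemma lhs_neg_2_5_lt_1 x : 0 < x < PI/2 -> lhs (-2/5) x < 1.
Proof.
  intros Hx; pose proof PI_lt_3927_1250.
  destruct (sinc_cos_taylor x ltac:(lra)) as [[Hr1 _] [_ Hc2]].
  set (y := x^2) in *; assert (Hy : 0 < y <= 247/100) by (unfold y; split; nra).
  assert (Hr : 0 < sin x / x) by (apply Rdiv_lt_0_compat; [apply sin_gt_0|]; lra).
  assert (Hc : 0 < cos x) by (apply cos_gt_0; lra).
  rewrite lhs_root_form by easy; replace (- (-2/5)) with (2/5) by lra.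
  set (u := Rpower (sin x / x) (2/5)); set (v := Rpower (cos x) (2/5)).
  apply root_form_lt_1; [apply Rpower_gt_0|].
  assert (Hu : sinc_2_5_lo y <= u).
  { apply (pow_le_inv _ _ 5); [apply Rlt_le, Rpower_gt_0 | easy |].
    unfold u; rewrite (Rpower_pow_root _ _ 2) by (simpl; lra).
    pose proof (sinc_2_5_lo_pow_lt y Hy).
    assert (sinc_lo y ^ 2 <= (sin x / x) ^ 2) by (apply pow_incr; pose proof (sinc_lo_pos y Hy); lra).
    lra. }
  assert (Hv : v <= cos_2_5_hi y).
  { apply (pow_le_inv _ _ 5); [pose proof (cos_2_5_hi_pos y Hy); lra | easy |].
    unfold v; rewrite (Rpower_pow_root _ _ 2) by (simpl; lra).
    pose proof (cos_hi_sq_lt y Hy).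
    assert (cos x ^ 2 <= cos_hi y ^ 2) by (apply pow_incr; lra).
    lra. }
  assert (cos_2_5_hi y <= 1).
  { unfold cos_2_5_hi; assert (0 < y^2) by (apply pow_lt; lra).
    assert (0 < y^3) by (apply pow_lt; lra); lra. }
  pose proof (sinc_2_5_lo_gt y Hy); pose proof (quartic_2_5_gt_1 y Hy).
  pose proof (quartic_mono (sinc_2_5_lo y) u (cos_2_5_hi y) v ltac:(lra) Hv ltac:(lra)).
  lra.
Qed.

Lemma lhs_neg_1_2_gt_1 x : 0 < x -> x^2 <= 1907/1000 -> lhs (-1/2) x > 1.
Proof.
  intros Hx0 Hx2; assert (Hx : 0 < x < PI/2) by (pose proof PI_gt_157_50; nra).
  destruct (sinc_cos_taylor x ltac:(nra)) as [[_ Hr2] [Hc1 _]].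
  set (y := x^2) in *; assert (Hy : 0 < y <= 1907/1000) by (split; [apply pow_lt|]; lra).
  assert (Hr : 0 < sin x / x) by (apply Rdiv_lt_0_compat; [apply sin_gt_0|]; lra).
  assert (Hc : 0 < cos x) by (apply cos_gt_0; lra).
  rewrite lhs_root_form by easy; replace (- (-1/2)) with (1/2) by lra.
  set (u := Rpower (sin x / x) (1/2)); set (v := Rpower (cos x) (1/2)).
  apply root_form_gt_1; [apply Rpower_gt_0|].
  assert (Hu : u <= sinc_sqrt_hi y).
  { apply (pow_le_inv _ _ 2); [pose proof (sinc_sqrt_hi_gt y Hy); lra | easy |].
    unfold u; rewrite (Rpower_pow_root _ _ 1) by (simpl; lra).
    pose proof (sinc_hi_lt_sq y Hy); lra. }
  assert (Hv : cos_sqrt_lo y <= v).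
  { apply (pow_le_inv _ _ 2); [apply Rlt_le, Rpower_gt_0 | easy |].
    unfold v; rewrite (Rpower_pow_root _ _ 1) by (simpl; lra).
    pose proof (cos_sqrt_lo_sq_lt y Hy); lra. }
  assert (v <= 1).
  { apply (pow_le_inv _ _ 2); [lra | easy |].
    unfold v; rewrite (Rpower_pow_root _ _ 1) by (simpl; lra).
    pose proof (COS_bound x); simpl; lra. }
  pose proof (sinc_sqrt_hi_gt y Hy); pose proof (quartic_sqrt_lt_1 y Hy).
  pose proof (quartic_mono u (sinc_sqrt_hi y) v (cos_sqrt_lo y)
                ltac:(split; [apply Rlt_le, Rpower_gt_0 | easy]) Hv ltac:(lra)).
  lra.
Qed.

(** * The critical exponent *)

Lemma lhs_p_crit_first_term r : 0 < r ->
  1 - ln 3 / ln (PI/2) * ln (r * (PI/2)) <= 1/3 * Rpower r (4 * p_crit).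
Proof.
  intros Hr; pose proof PI_gt_157_50; pose proof ln_half_PI_pos.
  set (lam := ln 3 / ln (PI/2)).
  assert (E : 1/3 * Rpower r (4 * p_crit) = exp (- lam * ln (r * (PI/2)))).
  { unfold Rpower; rewrite p_crit_eq, ln_mult by lra; fold lam.
    replace (4 * (- lam / 4) * ln r) with (- lam * (ln r + ln (PI/2)) + ln 3)
      by (unfold lam; field; lra).
    rewrite exp_plus, exp_ln by lra; field. }
  rewrite E; pose proof (exp_ineq1_le (- lam * ln (r * (PI/2)))); lra.
Qed.

(* With x = PI/2 - u, 2 x ((sin x / x) (PI/2) - 1) = 2 u - PI (1 - cos u) <= u * this,
   by PI > 157/50 and 1 - cos u >= u^2/2 - u^4/24. *)
Definition near_half_pi_poly (u : R) := 2 - 157*u/100 + 157*u^3/1200.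

Section NearHalfPi.
Variable u : R.
Hypothesis Hu : 0 < u < 19/100.
Let x := PI/2 - u.

Lemma near_half_pi_certificate :
  (61/50)^8 * u^3 * near_half_pi_poly u ^ 8 < (2/3)^8 * (157/100 - u)^13 * (1 - u^2/6)^5.
Proof.
  unfold near_half_pi_poly; bernstein_certificate u 0%nat (19/100)
    [90143713837089464819901484433920000000000000000000000000000/220453634644044001445340130751177771979; 2292061819348160150070361311211520000000000000000000000000000/220453634644044001445340130751177771979; 84160285140212923256014131584180558720000000000000000000000000/661360903932132004336020392253533315937; 219988013949563328088122878731934600960000000000000000000000000/220453634644044001445340130751177771979; 11169905357526684888717115972772576716902208000000000000000000000/1984082711796396013008061176760599947811; 48262032261155717422636904337469871648655616000000000000000000000/1984082711796396013008061176760599947811; 497979182113660891933693156750539569686838782345600000000000000000/5952248135389188039024183530281799843433; 1399025049858758197589356469974735275317639894854400000000000000000/5952248135389188039024183530281799843433; 9806545826166682794014096368603028031255282970038008336000000000000/17856744406167564117072550590845399530299; 338658508226865400614661774495716314856425464875559089766400000000/313276217652062528369693870014831570707; 5101476061028382313039031142724718156210383426259222489447906560000/2819485958868562755327244830133484136363; 7307840513447540805037864052294709576755613244981136791623646627072/2819485958868562755327244830133484136363; 999824250236002201471560051219755296262116196494260487547369790464/313276217652062528369693870014831570707; 5967378683942716555476424973534320769896858232217157545667053350677792/1762178724292851722079528018833427585226875; 5460465230341088485882057764251081840337482684137843481603222803423312/1762178724292851722079528018833427585226875; 3587974725109410054199553889616468801036909197550652346034273622568246457/1468482270244043101732940015694522987689062500;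 10007420523156782752180182069755121973872256507606925430044839750597343/6043136914584539513304279899977460854687500; 3134739724288865984777924301103562244880048726224199640053626432311365770149/3263293933875651337184311145987828861531250000000; 206172857802863992011750493110149341906984802879339469244275869270507848919/435105857850086844957908152798377181537500000000; 4824522655529563563435889188665037830665626910259446369018600981310074467877963/24494848293782666827260014527908641331000000000000000; 4171759765728189008157752111313014892515102075540632435048061692495318006005281/61237120734456667068150036319771603327500000000000000; 23597787173582971787076407270609136517579709124760473841465214425935615493237928119/1224742414689133341363000726395432066550000000000000000000; 10648411658500740810878433192986033322669010840352376697079786271201683027270895919/2449484829378266682726001452790864133100000000000000000000; 73922370341577496994779348738300467974810409228255605395834734802998762570140048501347/97979393175130667309040058111634565324000000000000000000000000; 27956239605157586365213866728348258173718284772401748086417566211680771693336579208271/293938179525392001927120174334903695972000000000000000000000000; 46282988408121154673952050685540670533183575542256003420729280295872473595649111824484819/5878763590507840038542403486698073919440000000000000000000000000000; 1010593416656865567028286698868925218593576898810872934460329523116278483210955337994819/2939381795253920019271201743349036959720000000000000000000000000000; 19353978633545206146272005382625960929504380200760475467321503246682343667037984876080960341/5643613046887526437000707347230150962662400000000000000000000000000000000].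
Qed.

Lemma near_half_pi_poly_pos : 0 < near_half_pi_poly u.
Proof. unfold near_half_pi_poly; assert (0 < u^3) by (apply pow_lt; lra); lra. Qed.

Lemma ln_sinc_scaled_le : ln (sin x / x * (PI/2)) <= u * near_half_pi_poly u / (2 * x).
Proof.
  pose proof PI_gt_157_50.
  assert (Hx : 0 < x) by (unfold x; lra).
  destruct (sin_cos_taylor_small u ltac:(lra)) as [_ [Hc1 Hc2]].
  assert (Hm : 0 < sin x / x * (PI/2)).
  { unfold x; rewrite sin_shift; apply Rmult_lt_0_compat; [apply Rdiv_lt_0_compat|]; nra. }
  apply Rle_trans with (sin x / x * (PI/2) - 1).
  { pose proof (exp_ineq1_le (ln (sin x / x * (PI/2)))); rewrite exp_ln in * by easy; lra. }
  assert (E : sin x / x * (PI/2) - 1 = (2 * u - PI * (1 - cos u)) / (2 * x))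
    by (unfold x; rewrite sin_shift; field; lra).
  rewrite E; apply Rmult_le_compat_r; [apply Rlt_le, Rinv_0_lt_compat; lra|].
  assert (0 <= u^2/2 - u^4/24).
  { replace (u^2/2 - u^4/24) with (u^2 * (12 - u^2) / 24) by field.
    assert (0 <= u^2 * (12 - u^2)) by (apply Rmult_le_pos; nra); lra. }
  assert (157/50 * (u^2/2 - u^4/24) <= PI * (1 - cos u)) by (apply Rmult_le_compat; lra).
  unfold near_half_pi_poly; nra.
Qed.

Lemma Rpower_tan_div_ge : Rpower (x * sin u) (5/8) <= Rpower (tan x / x) p_crit.
Proof.
  pose proof PI_gt_157_50; pose proof PI_lt_3927_1250; pose proof p_crit_bounds.
  assert (Hx : 0 < x < 2) by (unfold x; lra).
  destruct (sin_cos_taylor_small u ltac:(lra)) as [_ [Hc1 _]].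
  assert (Hs : 0 < sin u) by (apply sin_gt_0; lra).
  assert (Hsu : sin u < u) by (apply sin_lt_x; lra).
  pose proof (COS_bound u).
  assert (Et : tan x / x = / (x * sin u / cos u)).
  { unfold tan, x; rewrite sin_shift, cos_shift; field; nra. }
  assert (Hxs : x * sin u <= x * sin u / cos u).
  { unfold Rdiv; rewrite <- (Rmult_1_r (x * sin u)) at 1.
    apply Rmult_le_compat_l; [apply Rmult_le_pos; lra|].
    rewrite <- Rinv_1; apply Rinv_le_contravar; nra. }
  assert (Hsmall : x * sin u / cos u <= 1).
  { apply (Rmult_le_reg_r (cos u)); [nra|].
    unfold Rdiv; rewrite Rmult_assoc, Rinv_l by nra.
    assert (x * sin u <= 2 * (19/100)) by (apply Rmult_le_compat; lra); nra. }
  apply Rle_trans with (Rpower (tan x / x) (-5/8)).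
  - rewrite Et, Rpower_inv by nra.
    replace (- (-5/8)) with (5/8) by lra.
    apply Rle_Rpower_l; [lra | split; [apply Rmult_lt_0_compat|]; lra].
  - apply Rle_Rpower; [|lra].
    rewrite Et; rewrite <- Rinv_1 at 1; apply Rinv_le_contravar; [|lra].
    apply Rdiv_lt_0_compat; [apply Rmult_lt_0_compat|]; nra.
Qed.

Lemma near_half_pi_pow8_lt :
  (61/50)^8 * u^8 * near_half_pi_poly u ^ 8 < (2/3)^8 * x^13 * sin u ^ 5.
Proof.
  pose proof PI_gt_157_50.
  assert (Hx : 157/100 - u <= x) by (unfold x; lra).
  destruct (sin_cos_taylor_small u ltac:(lra)) as [Hs _].
  pose proof near_half_pi_certificate as Hc.
  set (W := near_half_pi_poly u) in *; set (a := 157/100 - u) in *; set (b := 1 - u^2/6) in *.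
  assert (Hab : a^13 * (u * b)^5 <= x^13 * sin u ^ 5).
  { assert (0 <= a) by (unfold a; lra).
    assert (0 <= u * b <= sin u) by (unfold b; split; nra).
    apply Rmult_le_compat; [apply pow_le | apply pow_le | apply pow_incr | apply pow_incr]; lra. }
  apply (Rmult_lt_compat_l (u^5)) in Hc; [|apply pow_lt; lra].
  replace (u^5 * ((61/50)^8 * u^3 * W^8)) with ((61/50)^8 * u^8 * W^8) in Hc by ring.
  replace (u^5 * ((2/3)^8 * a^13 * b^5)) with ((2/3)^8 * (a^13 * (u * b)^5)) in Hc by ring.
  apply (Rlt_le_trans _ _ _ Hc).
  rewrite Rmult_assoc; apply Rmult_le_compat_l; [apply pow_le|]; lra.
Qed.

Lemma near_half_pi_key :
  61/25 * (u * near_half_pi_poly u / (2 * x)) < 2/3 * Rpower (x * sin u) (5/8).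
Proof.
  pose proof PI_gt_157_50.
  assert (Hx : 0 < x) by (unfold x; lra).
  assert (Hs : 0 < sin u) by (apply sin_gt_0; lra).
  pose proof near_half_pi_pow8_lt; pose proof near_half_pi_poly_pos.
  set (W := near_half_pi_poly u) in *; set (z := Rpower (x * sin u) (5/8)).
  set (v := 61/25 * (u * W / (2 * x))).
  assert (Hz : (2/3 * z) ^ 8 * x^8 = (2/3)^8 * x^13 * sin u ^ 5).
  { rewrite Rpow_mult_distr; unfold z.
    rewrite (Rpower_pow_root _ _ 5) by (try apply Rmult_lt_0_compat; simpl; lra); ring. }
  assert (Hv : v ^ 8 * x^8 = (61/50)^8 * u^8 * W^8) by (unfold v; field; lra).
  destruct (Rlt_or_le v (2/3 * z)) as [|Hle]; [easy | exfalso].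
  assert ((2/3 * z) ^ 8 <= v ^ 8)
    by (apply pow_incr; split; [apply Rmult_le_pos; [lra | apply Rlt_le, Rpower_gt_0] | easy]).
  assert (0 < x^8) by (apply pow_lt; lra).
  assert ((2/3 * z) ^ 8 * x^8 <= v ^ 8 * x^8) by (apply Rmult_le_compat_r; lra).
  lra.
Qed.

(* With m = (sin x / x) (PI/2) and lam = ln 3 / ln (PI/2), the first term of lhs is
   m^(-lam) >= 1 - lam ln m, where lam ln m = O(u); the second is at least (2/3) (x sin u)^(5/8). *)
Lemma lhs_p_crit_gt_1_near_half_pi : lhs p_crit x > 1.
Proof.
  pose proof PI_gt_157_50; pose proof ln_3_div_ln_half_PI_bounds.
  assert (Hx : 0 < x < PI/2) by (unfold x; lra).
  assert (Hr : 0 < sin x / x) by (apply Rdiv_lt_0_compat; [apply sin_gt_0|]; lra).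
  pose proof (lhs_p_crit_first_term _ Hr).
  pose proof Rpower_tan_div_ge; pose proof near_half_pi_key; pose proof ln_sinc_scaled_le.
  assert (0 <= u * near_half_pi_poly u / (2 * x)).
  { pose proof near_half_pi_poly_pos.
    apply Rmult_le_pos; [apply Rmult_le_pos | apply Rlt_le, Rinv_0_lt_compat]; lra. }
  set (L := ln (sin x / x * (PI/2))) in *; set (lam := ln 3 / ln (PI/2)) in *.
  assert (lam * L <= 61/25 * (u * near_half_pi_poly u / (2 * x)))
    by (destruct (Rle_lt_dec L 0); nra).
  unfold lhs; lra.
Qed.

End NearHalfPi.

Lemma lhs_p_crit_gt_1 x : 0 < x < PI/2 -> lhs p_crit x > 1.
Proof.
  intros Hx; pose proof PI_lt_3927_1250; pose proof p_crit_bounds.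
  destruct (Rlt_le_dec (PI/2 - x) (19/100)) as [Hnear|Hfar].
  - replace x with (PI/2 - (PI/2 - x)) by ring.
    apply lhs_p_crit_gt_1_near_half_pi; lra.
  - apply (lhs_gt_1_left x p_crit (-1/2)); try lra.
    apply lhs_neg_1_2_gt_1; [lra | nra].
Qed.

(** * Failure of the inequalities near the endpoints *)

Lemma atan_pos_lt T : 0 < T -> 0 < atan T < PI/2.
Proof.
  intros HT; pose proof (atan_increasing 0 T HT); rewrite atan_0 in *.
  pose proof (atan_bound T); lra.
Qed.

Lemma sinc_atan_inv_le T : 0 < T ->
  / (sin (atan T) / atan T) <= PI/2 * sqrt (1 + / T^2).
Proof.
  intros HT; destruct (atan_pos_lt T HT) as [Hx0 Hx1].
  assert (Hs : 0 < sqrt (1 + T²)) by (apply sqrt_lt_R0; unfold Rsqr; nra).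
  assert (HT2 : 0 < / T^2) by (apply Rinv_0_lt_compat, pow_lt; lra).
  assert (E : sqrt (1 + T²) = sqrt (1 + / T^2) * T).
  { replace (1 + T²) with ((1 + / T^2) * (T * T)) by (unfold Rsqr; field; lra).
    rewrite sqrt_mult, sqrt_square by nra; reflexivity. }
  rewrite sin_atan, E.
  replace (/ (T / (sqrt (1 + / T^2) * T) / atan T)) with (atan T * sqrt (1 + / T^2))
    by (field; repeat split; try lra; apply Rgt_not_eq, sqrt_lt_R0; lra).
  apply Rmult_le_compat_r; [apply sqrt_pos | lra].
Qed.

Lemma lhs_atan_le p T : -1 <= p < 0 -> 0 < T ->
  lhs p (atan T) <= 1/3 * (Rpower (PI/2) (-4 * p) * (1 + / T^2)^2) + 2/3 * Rpower (2 * T / PI) p.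
Proof.
  intros Hp HT; pose proof (atan_pos_lt T HT) as Hx.
  set (x := atan T) in *; set (z := / T^2).
  assert (Hz : 0 < z) by (apply Rinv_0_lt_compat, pow_lt; lra).
  assert (Hr : 0 < sin x / x) by (apply Rdiv_lt_0_compat; [apply sin_gt_0|]; lra).
  assert (Hfirst : Rpower (sin x / x) (4 * p) <= Rpower (PI/2) (-4 * p) * (1 + z)^2).
  { replace (4 * p) with (- (-4 * p)) by ring; rewrite <- Rpower_inv by easy.
    apply Rle_trans with (Rpower (PI/2 * sqrt (1 + z)) (-4 * p)).
    { apply Rle_Rpower_l; [lra | split; [apply Rinv_0_lt_compat; easy | apply sinc_atan_inv_le; easy]]. }
    rewrite <- Rpower_mult_distr by (try apply sqrt_lt_R0; lra).
    apply Rmult_le_compat_l; [apply Rlt_le, Rpower_gt_0|].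
    rewrite <- Rpower_sqrt, Rpower_mult, <- (Rpower_pow 2) by lra.
    apply Rle_Rpower; [lra | simpl; lra]. }
  assert (Hsecond : Rpower (tan x / x) p <= Rpower (2 * T / PI) p).
  { apply Rpower_le_compat_neg; [|lra].
    unfold x; rewrite tan_atan; fold x.
    split; [apply Rdiv_lt_0_compat; lra|].
    apply (Rmult_le_reg_r (PI * x)); [apply Rmult_lt_0_compat; lra|].
    unfold Rdiv; replace (2 * T * / PI * (PI * x)) with (2 * T * x) by (field; lra).
    replace (T * / x * (PI * x)) with (T * PI) by (field; lra).
    nra. }
  unfold lhs; fold x; lra.
Qed.

Lemma lhs_le_1_near_half_pi p : p_crit < p < 0 -> exists x, 0 < x < PI/2 /\ lhs p x <= 1.
Proof.
  intros Hp; pose proof PI_gt_157_50; pose proof ln_half_PI_pos; pose proof p_crit_bounds.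
  set (A := Rpower (PI/2) (-4 * p)).
  assert (HA : 0 < A < 3).
  { split; [apply Rpower_gt_0|]; unfold A, Rpower; rewrite <- (exp_ln 3) by lra.
    apply exp_increasing; rewrite p_crit_eq in Hp.
    assert (E : ln 3 = ln 3 / ln (PI/2) * ln (PI/2)) by (field; lra).
    rewrite E; apply Rmult_lt_compat_r; lra. }
  set (dl := 3 - A); set (T0 := Rpower (dl/4) (/ p)); set (T := PI/2 * T0 + 18/dl + 1).
  assert (HT0 : 0 < T0) by apply Rpower_gt_0.
  assert (Hdl : 0 < 18/dl) by (apply Rdiv_lt_0_compat; unfold dl; lra).
  assert (HT : 18/dl + 1 <= T) by (unfold T; nra).
  exists (atan T); split; [apply atan_pos_lt; lra|].
  eapply Rle_trans; [apply lhs_atan_le; lra|].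
  set (z := / T^2).
  assert (Hz : 0 < z <= dl/18).
  { split; [apply Rinv_0_lt_compat, pow_lt; lra|].
    apply Rle_trans with (/ T); [apply Rinv_le_contravar; simpl; nra|].
    replace (dl/18) with (/ (18/dl)) by (field; unfold dl; lra).
    apply Rinv_le_contravar; lra. }
  assert (Hpow : Rpower (2 * T / PI) p <= dl/4).
  { apply Rpower_le_of_root_le; [unfold dl; lra | lra |].
    fold T0; apply (Rmult_le_reg_l (PI/2)); [lra|].
    replace (PI/2 * (2 * T / PI)) with T by (field; lra); unfold T; lra. }
  assert (Hsq : A * (1 + z)^2 <= A + 3 * A * z).
  { assert ((1 + z)^2 <= 1 + 3 * z) by (unfold dl in Hz; nra).
    assert (A * (1 + z)^2 <= A * (1 + 3 * z)) by (apply Rmult_le_compat_l; lra); lra. }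
  assert (A * z <= 3 * (dl/18)) by (apply Rmult_le_compat; lra).
  fold A; unfold dl in *; lra.
Qed.

(* Lower bound for lhs (-q) x - 1 with y = x^2, from second-order expansions of the logarithms
   and third-order ones of the exponentials; its leading term is q (q - 2/5) y^2 / 9, and the
   choice y = (q - 2/5)/100 keeps the higher-order terms below it. *)
Definition near_zero_bound (q y : R) :=
  - 2/3 * q * (y^2/15 + y^3/20) + q^2/3 * (8 * (y/6 - y^2/120)^2 + (y/3 - y^2/24)^2)
  - q^3 * y^3 / 72.

Lemma near_zero_bound_pos d : 0 < d <= 3/5 -> 0 < near_zero_bound (d + 2/5) (d/100).
Proof.
  intros Hd; unfold near_zero_bound; bernstein_certificate d 3%nat (3/5)
    [4981/243000000; 298760011/3240000000000; 79620011/648000000000; 79540033/1555200000000].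
Qed.

Lemma sinc_cube_lt_cos_certificate y : 0 < y <= 1/100 ->
  (1 - y/6 + y^2/120)^3 < (1 - y/2 + y^2/24 - y^3/720) * (1 + y^2/15 + y^3/20).
Proof.
  intros Hy; bernstein_certificate y 3%nat (1/100)
    [762500/27; 3041675/36; 72800575/864; 16133583293/576000].
Qed.

Lemma exp_pair_ge_taylor q a b : 0 <= q -> 0 <= a -> 0 <= b ->
  1 - 2/3 * q * (b - 2 * a) + q^2/3 * (8 * a^2 + b^2) - q^3 * b^3 / 9
  <= 1/3 * exp (4 * q * a) + 2/3 * exp (- (q * b)).
Proof.
  intros Hq Ha Hb.
  pose proof (exp_ge_taylor2 (4 * q * a) ltac:(apply Rmult_le_pos; lra)).
  pose proof (exp_neg_ge_taylor3 (q * b) ltac:(apply Rmult_le_pos; lra)).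
  lra.
Qed.

Section NearZero.
Variable x : R.
Hypothesis Hx : 0 < x.
Hypothesis Hx2 : x^2 <= 1/100.
Let y := x^2.
Let r := sin x / x.
Let c := cos x.

Lemma near_zero_taylor :
  1 - y/6 <= r <= 1 - y/6 + y^2/120 /\ 1 - y/2 + y^2/24 - y^3/720 <= c <= 1 - y/2 + y^2/24.
Proof.
  destruct (sinc_cos_taylor x ltac:(nra)) as [Hr Hc]; fold y r c in Hr, Hc.
  assert (Hy : 0 < y <= 1/100) by (split; [apply pow_lt|]; easy).
  unfold sinc_lo, sinc_hi, cos_lo, cos_hi in *.
  assert (0 < y^2) by (apply pow_lt; lra).
  assert (0 < y^3) by (apply pow_lt; lra).
  assert (y^4 <= y^3) by (replace (y^4) with (y^3 * y) by ring; nra).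
  assert (y^5 <= y^4) by (replace (y^5) with (y^4 * y) by ring; nra).
  assert (y^3 <= y^2) by (replace (y^3) with (y^2 * y) by ring; nra).
  lra.
Qed.

Lemma near_zero_ranges : 0 < y <= 1/100 /\ 0 < c /\ c <= r <= 1.
Proof.
  pose proof near_zero_taylor.
  assert (Hy : 0 < y <= 1/100) by (split; [apply pow_lt|]; easy).
  split; [easy|]; nra.
Qed.

Lemma neg_ln_sinc_ge : y/6 - y^2/120 <= - ln r.
Proof.
  pose proof near_zero_taylor; pose proof near_zero_ranges.
  pose proof (ln_le_sub_1 r ltac:(lra)); lra.
Qed.

Lemma ln_sinc_div_cos_bounds : y/3 - y^2/24 <= ln (r / c) <= y/2.
Proof.
  pose proof near_zero_taylor as Ht; pose proof near_zero_ranges as Hs.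
  assert (Hrc : 0 < r / c) by (apply Rdiv_lt_0_compat; lra).
  split.
  - assert (E : ln (r / c) = - ln (c / r)).
    { rewrite <- ln_Rinv by (apply Rdiv_lt_0_compat; lra); f_equal; field; lra. }
    pose proof (ln_le_sub_1 (c / r) ltac:(apply Rdiv_lt_0_compat; lra)).
    assert (c / r <= 1 - (r - c)).
    { apply (Rmult_le_reg_r r); [lra|].
      unfold Rdiv; rewrite Rmult_assoc, Rinv_l by lra; nra. }
    lra.
  - pose proof (ln_le_sub_1 _ Hrc).
    assert (r / c <= 1 + y/2).
    { apply (Rmult_le_reg_r c); [lra|].
      unfold Rdiv; rewrite Rmult_assoc, Rinv_l by lra; nra. }
    lra.
Qed.

Lemma ln_sinc_cube_div_cos_le : ln (r / c) - 2 * (- ln r) <= y^2/15 + y^3/20.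
Proof.
  pose proof near_zero_taylor as Ht; pose proof near_zero_ranges as Hs.
  assert (E : ln (r / c) - 2 * (- ln r) = ln (r^3 / c)).
  { unfold Rdiv; rewrite !ln_mult, ln_Rinv, ln_pow by (try apply pow_lt; try apply Rinv_0_lt_compat; lra).
    simpl INR; ring. }
  rewrite E.
  pose proof (ln_le_sub_1 (r^3 / c) ltac:(apply Rdiv_lt_0_compat; [apply pow_lt|]; lra)).
  pose proof (sinc_cube_lt_cos_certificate y ltac:(lra)).
  assert (r^3 <= (1 - y/6 + y^2/120)^3) by (apply pow_incr; lra).
  assert ((1 - y/2 + y^2/24 - y^3/720) * (1 + y^2/15 + y^3/20) <= c * (1 + y^2/15 + y^3/20)).
  { apply Rmult_le_compat_r; [|lra].
    assert (0 < y^2) by (apply pow_lt; lra); assert (0 < y^3) by (apply pow_lt; lra); lra. }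
  assert (r^3 / c <= 1 + y^2/15 + y^3/20).
  { apply (Rmult_le_reg_r c); [lra|].
    unfold Rdiv; rewrite Rmult_assoc, Rinv_l by lra; lra. }
  lra.
Qed.

Lemma lhs_near_zero_ge p : p < 0 -> 1 + near_zero_bound (- p) y <= lhs p x.
Proof.
  intros Hp; pose proof near_zero_ranges as Hs.
  pose proof neg_ln_sinc_ge; pose proof ln_sinc_div_cos_bounds; pose proof ln_sinc_cube_div_cos_le.
  assert (Hx' : 0 < x < PI/2) by (pose proof PI_gt_157_50; split; nra).
  unfold lhs, Rpower; rewrite tan_div_eq by easy; fold r c.
  set (q := - p); set (a := - ln r) in *; set (b := ln (r / c)) in *.
  replace (4 * p * ln r) with (4 * q * a) by (unfold q, a; ring).
  replace (p * b) with (- (q * b)) by (unfold q; ring).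
  assert (0 <= y/6 - y^2/120 /\ 0 <= y/3 - y^2/24) by nra.
  eapply Rle_trans; [|apply exp_pair_ge_taylor; unfold q; lra].
  unfold near_zero_bound.
  assert (q * (b - 2 * a) <= q * (y^2/15 + y^3/20)) by (apply Rmult_le_compat_l; unfold q; lra).
  assert (8 * (y/6 - y^2/120)^2 + (y/3 - y^2/24)^2 <= 8 * a^2 + b^2)
    by (assert ((y/6 - y^2/120)^2 <= a^2) by (apply pow_incr; lra);
        assert ((y/3 - y^2/24)^2 <= b^2) by (apply pow_incr; lra); lra).
  assert (q^2/3 * (8 * (y/6 - y^2/120)^2 + (y/3 - y^2/24)^2) <= q^2/3 * (8 * a^2 + b^2))
    by (apply Rmult_le_compat_l; [assert (0 <= q^2) by (apply pow_le; unfold q; lra)|]; lra).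
  assert (q^3 * b^3 <= q^3 * (y/2)^3)
    by (apply Rmult_le_compat_l; [apply pow_le; unfold q; lra | apply pow_incr; lra]).
  replace (q^3 * y^3 / 72) with (q^3 * (y/2)^3 / 9) by field.
  lra.
Qed.

End NearZero.

Lemma lhs_ge_1_near_zero p : -1 < p < -2/5 -> exists x, 0 < x < PI/2 /\ lhs p x >= 1.
Proof.
  intros Hp; pose proof PI_gt_157_50.
  set (d := - p - 2/5); assert (Hd : 0 < d < 3/5) by (unfold d; lra).
  set (x := sqrt (d/100)).
  assert (Hx : 0 < x) by (apply sqrt_lt_R0; lra).
  assert (Hx2 : x^2 = d/100) by (unfold x; simpl; rewrite Rmult_1_r; apply sqrt_sqrt; lra).
  exists x; split; [split; nra|].
  pose proof (lhs_near_zero_ge x Hx ltac:(lra) p ltac:(lra)) as Hlhs.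
  rewrite Hx2 in Hlhs; replace (- p) with (d + 2/5) in Hlhs by (unfold d; ring).
  pose proof (near_zero_bound_pos d ltac:(lra)); lra.
Qed.

Theorem proposition4p12 :
  (forall p : R, p <> 0 ->
     ((forall x : R, 0 < x < PI / 2 -> lhs p x > 1) <->
      (p > 0 \/ p <= - ln 3 / (4 * (ln PI - ln 2))))) /\
  (forall p : R, p <> 0 ->
     ((forall x : R, 0 < x < PI / 2 -> lhs p x < 1) <->
      (-2/5 <= p < 0))).
Proof.
  pose proof p_crit_bounds; fold p_crit.
  assert (H1 : 0 < 1 < PI/2) by (pose proof PI_gt_157_50; lra).
  split; intros p Hp0; split.
  - intros Hgt; destruct (Rlt_le_dec 0 p) as [|Hp]; [now left | right].
    destruct (Rle_lt_dec p p_crit) as [|Hlt]; [easy | exfalso].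
    destruct (lhs_le_1_near_half_pi p ltac:(lra)) as [x [Hx Hle]].
    specialize (Hgt x Hx); lra.
  - intros [Hp | Hp] x Hx.
    + apply (lhs_gt_1_pos x p (-2/5)); [lra | now apply lhs_neg_2_5_lt_1].
    + apply (lhs_gt_1_left x p p_crit); [lra | lra | now apply lhs_p_crit_gt_1].
  - intros Hlt; destruct (Rlt_le_dec 0 p) as [Hp|Hp].
    { pose proof (lhs_gt_1_pos 1 p (-2/5) ltac:(lra) (lhs_neg_2_5_lt_1 1 H1)).
      specialize (Hlt 1 H1); lra. }
    split; [|lra].
    destruct (Rle_lt_dec (-2/5) p) as [|Hp']; [easy | exfalso].
    destruct (Rle_lt_dec p p_crit) as [Hc|Hc].
    + pose proof (lhs_gt_1_left 1 p p_crit Hc ltac:(lra) (lhs_p_crit_gt_1 1 H1)).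
      specialize (Hlt 1 H1); lra.
    + destruct (lhs_ge_1_near_zero p ltac:(lra)) as [x [Hx Hge]].
      specialize (Hlt x Hx); lra.
  - intros Hp x Hx; apply (lhs_lt_1_right x p (-2/5)); [easy | now apply lhs_neg_2_5_lt_1].
Qed.
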